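(* Let $G$ be a finite group (written additively, not necessarily abelian) with $\#G=q$, let $f:G\to G$ with $v=\#\mathrm{Im}(f)$, and let $k$ be an integer with $1\le k\le q$. If \[ q\sum_{i=0}^{k}(-1)^i\binom{k}{i}\frac{\binom{v}{i}}{\binom{q}{i}}<1,\] then there exists a cover of $G$ associated with $f$ of cardinality $k$.
   Context: $\mathrm{Im}(f)=\{f(x):x\in G\}$. The subtraction table $M_f$ has rows indexed by $G$, columns indexed by $\mathrm{Im}(f)$, and entry $m_{r,c}=r-c$ at position $(r,c)$. A subset $S\subseteq G$ is a cover of $G$ associated with $f$ if every row of $M_f$ contains an entry lying in $S$, i.e. for every $r\in G$ there exists $c\in\mathrm{Im}(f)$ with $r-c\in S$. *)

From HB Require Import structures.
From mathcomp Require Import all_boot all_order all_algebra all_fingroup.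
Set Implicit Arguments. Unset Strict Implicit. Unset Printing Implicit Defensive.
Import GRing.Theory Num.Theory.

(* The finite group G is the whole finGroupType gT (written multiplicatively in
   MathComp); the paper's additive difference r - c is r * c^-1. *)

Definition imf (gT : finGroupType) (f : gT -> gT) : {set gT} :=
  [set f x | x in [set: gT]].

(* S is a cover of G associated with f: every row r of the subtraction table
   contains an entry r - c (= r * c^-1) lying in S, for some c in Im(f). *)
Definition is_cover (gT : finGroupType) (f : gT -> gT) (S : {set gT}) : Prop :=
  forall r : gT, exists2 c, c \in imf f & (r * c^-1)%g \in S.

From mathcomp Require Import all_boot all_order all_algebra all_fingroup.
Import GRing.Theory Num.Theory.
From mathcomp Require Import ring.
Local Open Scope ring_scope.

(* A first-moment argument.  By inclusion-exclusion the alternating sum equals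
   C(q - v, k) / C(q, k), the probability that a uniformly random k-subset of G
   misses a fixed set of size v.  Each row of the subtraction table consists of
   v distinct entries, so the expected number of rows missed by a random k-set
   is q C(q - v, k) / C(q, k) < 1, and some k-set meets every row. *)

Lemma alt_sum_bin_mul_bin (R : pzRingType) (v q k : nat) : (v <= q)%N ->
  \sum_(i < k.+1) (-1) ^+ i * ('C(v, i) * 'C(q - i, k - i))%:R
    = 'C(q - v, k)%:R :> R.
Proof.
elim: v q k => [|v IHv] q k le_vq.
  rewrite big_ord_recl big1 => [|i _]; last by rewrite bin0n mul0n mulr0.
  by rewrite expr0 mul1r bin0 mul1n !subn0 addr0.
case: q le_vq => [//|q] le_vq; case: k => [|k].
  by rewrite big_ord_recl big_ord0 addr0 expr0 mul1r !bin0.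
(* Pascal's rule on C(v+1, i+1) splits the sum into the instances of the
   induction hypothesis at (q+1, k+1) and at (q, k). *)
have pascal (i : 'I_k.+1) :
    (-1) ^+ lift ord0 i
      * ('C(v.+1, lift ord0 i) * 'C(q.+1 - lift ord0 i, k.+1 - lift ord0 i))%:R
  = (-1) ^+ lift ord0 i
      * ('C(v, lift ord0 i) * 'C(q.+1 - lift ord0 i, k.+1 - lift ord0 i))%:R
    - (-1) ^+ i * ('C(v, i) * 'C(q - i, k - i))%:R :> R.
  by rewrite lift0 !subSS binS mulnDl natrD mulrDr exprS mulN1r !mulNr.
have IHSS := IHv q.+1 k.+1 (leqW le_vq); rewrite big_ord_recl !bin0 in IHSS.
rewrite big_ord_recl (eq_bigr _ (fun i _ => pascal i)) sumrB IHv // addrA.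
by rewrite !bin0 IHSS subSn // subSS binS natrD addrK.
Qed.

Lemma mul_bin_bin (q k i : nat) : (i <= k)%N -> (k <= q)%N ->
  ('C(q, k) * 'C(k, i) = 'C(q, i) * 'C(q - i, k - i))%N.
Proof.
move=> le_ik le_kq; have le_iq := leq_trans le_ik le_kq.
have facts_gt0 : (0 < i`! * (k - i)`! * (q - k)`!)%N by rewrite !muln_gt0 !fact_gt0.
apply/eqP; rewrite -(eqn_pmul2r facts_gt0); apply/eqP.
have sub_sub : (q - i - (k - i) = q - k)%N by rewrite subnBA // subnK.
have lhs := bin_fact le_kq; have rhs := bin_fact le_iq.
have := bin_fact le_ik; have := bin_fact (leq_sub2r i le_kq).
rewrite sub_sub => inner_rhs inner_lhs.
transitivity q`!; first by rewrite -lhs -inner_lhs; ring.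
by rewrite -rhs -inner_rhs; ring.
Qed.

Lemma alt_sum_bin_ratio (R : numFieldType) (v q k : nat) :
  (v <= q)%N -> (k <= q)%N ->
  \sum_(i < k.+1) (-1) ^+ i * 'C(k, i)%:R * ('C(v, i)%:R / 'C(q, i)%:R)
    = 'C(q - v, k)%:R / 'C(q, k)%:R :> R.
Proof.
move=> le_vq le_kq.
have binq_neq0 j : (j <= q)%N -> 'C(q, j)%:R != 0 :> R.
  by move=> le_jq; rewrite pnatr_eq0 -lt0n bin_gt0.
rewrite -(@alt_sum_bin_mul_bin R v q k le_vq) mulr_suml; apply: eq_bigr => i _.
have le_ik : (i <= k)%N by rewrite -ltnS.
have ratio : 'C(k, i)%:R / 'C(q, i)%:R = 'C(q - i, k - i)%:R / 'C(q, k)%:R :> R.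
  apply/eqP; rewrite eqr_div ?binq_neq0 ?(leq_trans le_ik) //.
  by rewrite -!natrM mulnC mul_bin_bin // mulnC.
rewrite natrM.
transitivity ((-1) ^+ i * 'C(v, i)%:R * ('C(k, i)%:R / 'C(q, i)%:R) : R).
  by ring.
by rewrite ratio; ring.
Qed.

Lemma card_draws_disjoint (T : finType) (A : {set T}) (k : nat) :
  #|[set S : {set T} | [disjoint S & A] & #|S| == k]| = 'C(#|T| - #|A|, k).
Proof.
rewrite -(cardsC A) addKn -cards_draws.
by apply: eq_card => S; rewrite !inE disjoints_subset.
Qed.

Lemma exists_hitting_set (T I : finType) (A : I -> {set T}) (v k : nat) :
  (forall i, v <= #|A i|)%N -> (#|I| * 'C(#|T| - v, k) < 'C(#|T|, k))%N ->
  exists2 S : {set T}, #|S| = k & forall i, ~~ [disjoint S & A i].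
Proof.
move=> le_vA lt_count.
have [/existsP[S /andP[/eqP cardS /forallP hitS]] | no_hit] :=
  boolP [exists S : {set T}, (#|S| == k) && [forall i, ~~ [disjoint S & A i]]].
  by exists S.
suff : ('C(#|T|, k) <= #|I| * 'C(#|T| - v, k))%N by rewrite leqNgt lt_count.
set K := [set S : {set T} | #|S| == k].
have missed S : S \in K -> exists i, [disjoint S & A i].
  rewrite inE => cardS; apply/existsP; apply: contraNT no_hit => /existsPn hitS.
  by apply/existsP; exists S; rewrite cardS; apply/forallP.
have count_missed :
    (#|K| <= \sum_i \sum_(S in K) [disjoint S & A i])%N.
  rewrite exchange_big -sum1_card; apply: leq_sum => S KS.
  by have [i miss] := missed S KS; rewrite (bigD1 i) //= miss.
rewrite -card_draws -/K (leq_trans count_missed) // -sum_nat_const.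
apply: leq_sum => i _; rewrite -big_mkcondr sum1dep_card.
apply: leq_trans (leq_bin2l _ (leq_sub2l _ (le_vA i))).
rewrite -card_draws_disjoint; apply/subset_leq_card/subsetP => S.
by rewrite !inE => /andP[-> ->].
Qed.

Definition subtraction_row {gT : finGroupType} (f : gT -> gT) (r : gT) : {set gT} :=
  [set (r * c^-1)%g | c in imf f].

Lemma card_subtraction_row (gT : finGroupType) (f : gT -> gT) (r : gT) :
  #|subtraction_row f r| = #|imf f|.
Proof. by rewrite card_imset // => c d /mulgI /invg_inj. Qed.

Lemma cover_of_meets_rows (gT : finGroupType) (f : gT -> gT) (S : {set gT}) :
  (forall r, ~~ [disjoint S & subtraction_row f r]) -> is_cover f S.
Proof.
move=> meetS r; have := meetS r; rewrite -setI_eq0.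
by case/set0Pn => x /setIP[Sx /imsetP[c Ic rc]]; exists c; rewrite // -rc.
Qed.

Theorem theorem6p1 (gT : finGroupType) (f : gT -> gT) (k : nat) :
  (1 <= k)%N -> (k <= #|[set: gT]|)%N ->
  (#|[set: gT]|%:R
     * \sum_(i < k.+1) (-1) ^+ i * ('C(k, i))%:R
         * (('C(#|imf f|, i))%:R / ('C(#|[set: gT]|, i))%:R) < (1 : rat)) ->
  exists S : {set gT}, #|S| = k /\ is_cover f S.
Proof.
move=> _ le_kq lt_sum.
have le_vq : (#|imf f| <= #|[set: gT]|)%N by apply/subset_leq_card/subsetT.
rewrite alt_sum_bin_ratio // mulrA ltr_pdivrMr ?ltr0n ?bin_gt0 // mul1r in lt_sum.
rewrite -natrM ltr_nat in lt_sum.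
have [S cardS meetS] :
    exists2 S : {set gT}, #|S| = k & forall r, ~~ [disjoint S & subtraction_row f r].
  apply: (@exists_hitting_set _ _ _ #|imf f|); last by rewrite -cardsT.
  by move=> r; rewrite card_subtraction_row.
by exists S; split; last exact: cover_of_meets_rows.
Qed.
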